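(* Every finitely generated free semigroup is weakly homogeneous.
   Context: A semigroup $S$ is weakly homogeneous if for every isomorphism $\varphi:A\to B$ between finitely generated subsemigroups $A,B$ of $S$ such that both $\varphi$ and $\varphi^{-1}:B\to A$ extend to endomorphisms of $S$, the map $\varphi$ extends to an automorphism of $S$. *)

From Stdlib Require List.
From mathcomp Require Import all_boot.
Set Implicit Arguments. Unset Strict Implicit. Unset Printing Implicit Defensive.

Record semigroup := Semigroup {
  sg_carrier :> Type;
  sg_op : sg_carrier -> sg_carrier -> sg_carrier;
  sg_assoc : forall x y z, sg_op x (sg_op y z) = sg_op (sg_op x y) z }.

Section Generic.
Variable S : semigroup.
Local Notation "x * y" := (sg_op x y).

Inductive generated (gens : list S) : S -> Prop :=
| gen_in : forall x, List.In x gens -> generated gens x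
| gen_op : forall x y, generated gens x -> generated gens y -> generated gens (x * y).

Definition subsemigroup (A : S -> Prop) : Prop :=
  forall x y, A x -> A y -> A (x * y).

Definition fin_gen_subsemigroup (A : S -> Prop) : Prop :=
  exists gens : list S, forall x, A x <-> generated gens x.

Definition endomorphism (g : S -> S) : Prop :=
  forall x y, g (x * y) = g x * g y.

Definition automorphism (g : S -> S) : Prop :=
  endomorphism g /\ bijective g.

Definition iso_between (A B : S -> Prop) (phi : S -> S) : Prop :=
  [/\ forall x, A x -> B (phi x),
      forall x y, A x -> A y -> phi (x * y) = phi x * phi y,
      forall x y, A x -> A y -> phi x = phi y -> x = y
    & forall y, B y -> exists2 x, A x & phi x = y].

Definition weakly_homogeneous : Prop :=
  forall (A B : S -> Prop) (phi : S -> S),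
    fin_gen_subsemigroup A -> fin_gen_subsemigroup B ->
    iso_between A B phi ->
    (exists2 g, endomorphism g & forall x, A x -> g x = phi x) ->
    (* phi^{-1} : B -> A extends to an endomorphism of S *)
    (exists2 h, endomorphism h & forall x, A x -> h (phi x) = x) ->
    exists2 alpha, automorphism alpha & forall x, A x -> alpha x = phi x.
End Generic.

(* Free semigroup on an alphabet X: nonempty words over X, a word being
   represented as (first letter, remaining letters), with concatenation. *)
Definition fword (X : Type) := (X * seq X)%type.
Definition fword_op (X : Type) (u v : fword X) : fword X :=
  (u.1, u.2 ++ v.1 :: v.2).
Lemma fword_assoc (X : Type) (u v w : fword X) :
  fword_op u (fword_op v w) = fword_op (fword_op u v) w.
Proof. by case: u => a s; case: v => b t; case: w => c r; rewrite /fword_op /= -catA. Qed.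

Definition free_semigroup (X : Type) : semigroup :=
  @Semigroup (fword X) (@fword_op X) (@fword_assoc X).

(* Endomorphisms of a free semigroup never shorten words.  If [g] and [h]
   extend [phi] and its inverse, then [h \o g] fixes every word of [A], hence
   every letter occurring in [A]; so [g] sends these letters injectively to
   letters.
   Over a finite alphabet that injection extends to a permutation of the
   alphabet, and the automorphism it induces agrees with [g], hence with
   [phi], on [A]. *)
From mathcomp Require Import all_boot zify.
Set Implicit Arguments. Unset Strict Implicit. Unset Printing Implicit Defensive.

Section FreeSemigroup.
Variable X : eqType.
Local Notation S := (free_semigroup X).

Definition letter (a : X) : fword X := (a, [::]).

Definition len (w : fword X) : nat := (size w.2).+1.

Definition letters (w : fword X) : seq X := w.1 :: w.2.

Lemma len_op (u v : fword X) : len (fword_op u v) = len u + len v.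
Proof. by case: u => a s; case: v => b t; rewrite /len /= size_cat addSn. Qed.

Lemma len1_letter (w : fword X) : len w <= 1 -> w = letter w.1.
Proof. by case: w => a [|]. Qed.

Lemma endo_cons (g : S -> S) a b t : endomorphism g ->
  g (a, b :: t) = fword_op (g (letter a)) (g (b, t)).
Proof. by move=> endo_g; apply: (endo_g (letter a) (b, t)). Qed.

Lemma len_endo (g : S -> S) w : endomorphism g -> len w <= len (g w).
Proof.
move=> endo_g; case: w => a s; elim: s a => [|b t IHt] a //.
by rewrite endo_cons // len_op; move: (IHt b); rewrite /len /=; lia.
Qed.

Lemma endo_fixed_letters (k : S -> S) w : endomorphism k -> k w = w ->
  forall c, c \in letters w -> k (letter c) = letter c.
Proof.
move=> endo_k; case: w => a s; elim: s a => [|b t IHt] a /=.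
  by move=> ka c; rewrite inE => /eqP ->.
rewrite endo_cons //; move: (len_endo (b, t) endo_k).
case ka: (k (letter a)) => [a' s']; case kbt: (k (b, t)) => [b' t'].
(* [k (b, t)] is at least as long as [(b, t)], so [k (letter a)] is a letter. *)
rewrite /fword_op /len /= => len_t [Ea Es] c; subst a'.
case: s' ka Es => [|? ?] ka /=; last first.
  by move/(congr1 size) => /=; rewrite size_cat /=; lia.
case=> Eb Et; subst b' t'; rewrite inE => /predU1P [-> //|].
exact: IHt b kbt c.
Qed.

Lemma retract_letter (g h : S -> S) c : endomorphism h ->
  h (g (letter c)) = letter c -> g (letter c) = letter (g (letter c)).1.
Proof.
by move=> endo_h hgc; apply: len1_letter; have := len_endo (g (letter c)) endo_h; rewrite hgc.
Qed.

Definition wmap (f : X -> X) (w : fword X) : fword X := (f w.1, map f w.2).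

Lemma wmap_endo (f : X -> X) : @endomorphism S (wmap f).
Proof. by move=> [a s] [b t]; rewrite /wmap /fword_op /= map_cat. Qed.

Lemma wmap_bij (f : X -> X) : bijective f -> bijective (wmap f).
Proof.
case=> f' fK f'K; exists (wmap f') => -[a s]; rewrite /wmap /= -map_comp.
  by rewrite fK (eq_map fK) map_id.
by rewrite f'K (eq_map f'K) map_id.
Qed.

Lemma endo_eq_wmap (g : S -> S) (f : X -> X) w : endomorphism g ->
  {in letters w, forall c, g (letter c) = letter (f c)} -> g w = wmap f w.
Proof.
move=> endo_g; case: w => a s; elim: s a => [|b t IHt] a gf; first exact: gf (mem_head _ _).
rewrite endo_cons // gf ?mem_head // IHt // => c ct.
by apply: gf; rewrite inE ct orbT.
Qed.

End FreeSemigroup.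

Lemma inj_in_extend_bij (T : finType) (C : {set T}) (f : T -> T) :
  {in C &, injective f} -> exists2 s : T -> T, bijective s & {in C, s =1 f}.
Proof.
move=> f_inj.
set D := enum (~: C); set E := enum (~: (f @: C)).
have size_DE : size D = size E.
  rewrite -!cardE; move: (cardsC C) (cardsC (f @: C)).
  by rewrite card_in_imset //; lia.
(* [s] sends the i-th element of [~: C] to the i-th element of [~: f @: C]. *)
pose s x := if x \in C then f x else nth x E (index x D).
have sD x : x \notin C -> index x D < size E /\ s x \notin f @: C.
  move=> xC; have xE : index x D < size E by rewrite -size_DE index_mem mem_enum inE.
  by rewrite /s (negbTE xC); split; rewrite // -in_setC -mem_enum mem_nth.
exists s; last by move=> x xC; rewrite /s xC.
apply: injF_bij => x y.
case xC: (x \in C); case yC: (y \in C).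
- by rewrite /s xC yC; apply: f_inj.
- by case: (sD y (negbT yC)) => _ /[swap] <-; rewrite /s xC imset_f.
- by case: (sD x (negbT xC)) => _ /[swap] ->; rewrite /s yC imset_f.
have [xD yD] : x \in D /\ y \in D by rewrite !mem_enum !inE xC yC.
case: (sD x (negbT xC)) (sD y (negbT yC)) => [ix _] [iy _].
rewrite /s xC yC (set_nth_default x y iy) => /(congr1 (index^~ E)).
rewrite !index_uniq ?enum_uniq // => /(congr1 (nth x D)).
by rewrite !nth_index.
Qed.

Theorem mainTheorem4 (X : finType) :
  weakly_homogeneous (free_semigroup X).
Proof.
move=> A B phi _ _ _ [g endo_g gA] [h endo_h hA].
pose C := [set c | h (g (letter c)) == letter c].
have endo_hg : endomorphism (fun w => h (g w)) by move=> x y; rewrite endo_g endo_h.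
have A_letters_in_C w c : A w -> c \in letters w -> c \in C.
  move=> Aw cw; rewrite inE; apply/eqP.
  by apply: (endo_fixed_letters endo_hg _ cw); rewrite gA ?hA.
pose gl c := (g (letter c)).1.
have g_letter c : c \in C -> g (letter c) = letter (gl c).
  by rewrite inE => /eqP; apply: retract_letter.
have gl_inj : {in C &, injective gl}.
  move=> x y xC yC glxy; apply: (congr1 fst (_ : letter x = letter y)).
  move: (xC) (yC); rewrite !inE => /eqP <- /eqP <-.
  by rewrite !g_letter // glxy.
have [s s_bij sE] := inj_in_extend_bij gl_inj.
exists (wmap s); first by split; [exact: wmap_endo | exact: wmap_bij].
move=> w Aw; rewrite -gA //; apply/esym/endo_eq_wmap => // c cw.
by rewrite g_letter ?sE //; apply: A_letters_in_C cw.
Qed.
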